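(* (Hyperdense coding and superadditivity in hypersphere theories.) Let $N\ge1$, $n=2^N-1$, and consider the bipartite hypersphere theory with joint state space $\Omega_{AB}$, effects $\mathcal E_{AB}$ and allowed local transformations the convex hull of $\{T_\mu\}$, as defined in the context. In the dense coding protocol where Alice and Bob share $\phi_{\mathbf 0}$, Alice encodes $x\in\{0,1\}^N$ by applying $T_x$ and Bob measures $\{E_y\}_{y\in\{0,1\}^N}$, one has $p(y|x)=\delta_{y,x}$. Consequently $$\chi_C(\Omega_{AB})\ge\chi_{DC}(\Omega_{AB})\ge N,$$ whereas $\chi_C(\Omega_A)=\chi_C(\Omega_B)=1$. In particular for $N\ge3$ the protocol is hyperdense ($\chi_{DC}>2\chi_C(\Omega_A)$) and the classical capacity is superadditive: $\chi_C(\Omega_{AB})>\chi_C(\Omega_A)+\chi_C(\Omega_B)$.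
   Context: The $n$-dimensional hypersphere theory has state space $\Omega_n=\{(1,r)^{\mathrm t}: r\in\mathbb R^n,\ \lVert r\rVert\le1\}$, unit effect $u=(1,\mathbf 0)^{\mathrm t}$, effects $\mathcal E=\{e:0\le e\cdot\omega\le1\ \forall\omega\in\Omega_n\}$; here $\Omega_A=\Omega_B=\Omega_n$. Bipartite states are real $2^N\times2^N$ matrices, identified with $\mathbb R^{2^N}\otimes\mathbb R^{2^N}$ via $v\otimes w=vw^{\mathrm t}$, inner product $X\cdot Y=\mathrm{Tr}(X^{\mathrm t}Y)$; $\Omega_A\otimes_{\min}\Omega_B$ is the convex hull of product states. Coordinates of $\mathbb R^{2^N}$ are indexed by $\nu\in\{0,1\}^N$, with $\nu=\mathbf 0$ the first coordinate. For $\mu\in\{0,1\}^N$, $(d_\mu)_\nu=(-1)^{\mu\cdot\nu}$ ($\mu\cdot\nu$ = inner product mod 2); $\phi_\mu=\mathrm{diag}(d_\mu)$; $\Omega_{AB}=$ convex hull of $\Omega_A\otimes_{\min}\Omega_B\cup\{\phi_\mu\}$; $\mathcal E_{AB}=\{E:0\le E\cdot\phi\le1\ \forall\phi\in\Omega_{AB}\}$; $E_\mu=2^{-N}\phi_\mu$; $T_\mu=\phi_\mu$ acting on $A$ by $\phi\mapsto T_\mu\phi$. Classical capacity $\chi_C(\Omega)$ of a state space with effect set: supremum of $I(X:Y)$ over finite message distributions $p_x$, states $\omega_x\in\Omega$ and measurements (finite families of effects summing to the unit) with $p(y|x)=e_y\cdot\omega_x$. Dense coding protocol with initial state $\phi$: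 message distribution $p_x$, allowed local transformations $T_x$ on $A$, measurement $\{E_y\}\subset\mathcal E_{AB}$, $p(y|x)=E_y\cdot(T_x\phi)$; $\chi_{DC}(\Omega_{AB})$ is the supremum of $I(X:Y)$ over all such protocols and initial states. *)

From HB Require Import structures.
From Stdlib Require Import Reals.
From mathcomp Require Import all_boot.

Set Implicit Arguments.
Unset Strict Implicit.
Unset Printing Implicit Defensive.

Local Open Scope R_scope.

Lemma Rplus_assoc' : associative Rplus.
Proof. by move=> x y z; rewrite Rplus_assoc. Qed.
Lemma Rplus_comm' : commutative Rplus.
Proof. exact: Rplus_comm. Qed.
Lemma Rplus_0_l' : left_id 0 Rplus.
Proof. exact: Rplus_0_l. Qed.

HB.instance Definition _ :=
  Monoid.isComLaw.Build R 0 Rplus Rplus_assoc' Rplus_comm' Rplus_0_l'.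

Definition sumR {T : finType} (f : T -> R) : R := \big[Rplus/0]_(i : T) f i.

Definition fdot {T : finType} (f g : T -> R) : R := sumR (fun i => f i * g i).

Definition conv {A : Type} (S : (A -> R) -> Prop) (x : A -> R) : Prop :=
  exists (k : nat) (l : 'I_k -> R) (s : 'I_k -> A -> R),
    (forall i, 0 <= l i) /\ sumR l = 1 /\ (forall i, S (s i)) /\
    (forall a, x a = sumR (fun i => l i * s i a)).

(* coordinates of R^(2^N) indexed by nu in {0,1}^N *)
Definition idx (N : nat) := {ffun 'I_N -> bool}.
Definition zero_idx (N : nat) : idx N := [ffun _ => false].
Definition vec (N : nat) := idx N -> R.
Definition mat (N : nat) := (idx N * idx N)%type -> R.

(* mu . nu (its parity is what matters; we use (-1)^(count)) *)
Definition bdot (N : nat) (mu nu : idx N) : nat := #|[set i | mu i && nu i]|.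
Definition dvec (N : nat) (mu : idx N) : vec N := fun nu => (-1) ^ (bdot mu nu).

Definition Omega (N : nat) (v : vec N) : Prop :=
  v (zero_idx N) = 1 /\
  sumR (fun i => if i == zero_idx N then 0 else (v i) ^ 2) <= 1.

Definition unit_vec (N : nat) : vec N := fun i => if i == zero_idx N then 1 else 0.

Definition Effect (N : nat) (e : vec N) : Prop :=
  forall w, Omega w -> 0 <= fdot e w <= 1.

Definition tensor (N : nat) (v w : vec N) : mat N := fun ij => v ij.1 * w ij.2.

Definition phi (N : nat) (mu : idx N) : mat N :=
  fun ij => if ij.1 == ij.2 then dvec mu ij.1 else 0.

Definition MinTensor (N : nat) (X : mat N) : Prop :=
  conv (fun Y => exists v w, Omega v /\ Omega w /\ Y = tensor v w) X.

Definition OmegaAB (N : nat) (X : mat N) : Prop :=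
  conv (fun Y => MinTensor Y \/ exists mu : idx N, Y = phi mu) X.

(* Tr(X^t Y) *)
Definition mdot (N : nat) (X Y : mat N) : R := fdot X Y.

Definition EffectAB (N : nat) (E : mat N) : Prop :=
  forall X, OmegaAB X -> 0 <= mdot E X <= 1.

Definition unitAB (N : nat) : mat N := tensor (@unit_vec N) (@unit_vec N).

Definition Emu (N : nat) (mu : idx N) : mat N := fun ij => / 2 ^ N * phi mu ij.

Definition Tmu (N : nat) (mu : idx N) : mat N := phi mu.
Definition AllowedT (N : nat) (T : mat N) : Prop :=
  conv (fun T' => exists mu : idx N, T' = Tmu mu) T.

Definition applyA (N : nat) (T X : mat N) : mat N :=
  fun ij => sumR (fun k : idx N => T (ij.1, k) * X (k, ij.2)).

Definition is_distr (k : nat) (p : 'I_k -> R) : Prop :=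
  (forall x, 0 <= p x) /\ sumR p = 1.

Definition log2 (x : R) : R := ln x / ln 2.

(* I(X:Y) in bits for p(x) and channel q x y = p(y|x); 0 log 0 = 0 *)
Definition MI (k m : nat) (p : 'I_k -> R) (q : 'I_k -> 'I_m -> R) : R :=
  sumR (fun x => sumR (fun y =>
    let j := p x * q x y in
    if Rlt_dec 0 j then j * log2 (q x y / sumR (fun x' => p x' * q x' y)) else 0)).

Definition achC {A : finType} (S : (A -> R) -> Prop) (Eff : (A -> R) -> Prop)
  (u : A -> R) (c : R) : Prop :=
  exists (k m : nat) (p : 'I_k -> R) (w : 'I_k -> A -> R) (e : 'I_m -> A -> R),
    is_distr p /\ (forall x, S (w x)) /\ (forall y, Eff (e y)) /\
    (forall a, sumR (fun y => e y a) = u a) /\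
    c = MI p (fun x y => fdot (e y) (w x)).

Definition achC_A (N : nat) := achC (@Omega N) (@Effect N) (@unit_vec N).
Definition achC_AB (N : nat) := achC (@OmegaAB N) (@EffectAB N) (@unitAB N).

Definition achDC (N : nat) (c : R) : Prop :=
  exists phi0 : mat N, OmegaAB phi0 /\
  exists (k m : nat) (p : 'I_k -> R) (T : 'I_k -> mat N) (E : 'I_m -> mat N),
    is_distr p /\ (forall x, AllowedT (T x)) /\ (forall y, EffectAB (E y)) /\
    (forall a, sumR (fun y => E y a) = @unitAB N a) /\
    c = MI p (fun x y => mdot (E y) (applyA (T x) phi0)).

From HB Require Import structures.
From Stdlib Require Import Reals Lra Psatz FunctionalExtensionality.
From mathcomp Require Import all_boot.

(* The Walsh vectors [d_mu] multiply as [d_mu * d_nu = d_(mu xor nu)] and sum to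
   [2^N [mu = 0]], so they are orthogonal: [T_x phi_0 = phi_x], [E_y . phi_x = delta_xy]
   and the [E_y] add up to the unit. On a product state [E_y] evaluates to
   [2^-N (1 + sum_(i <> 0) d_y(i) r_i s_i)], which lies in [0, 2^(1-N)] by AM-GM, so
   the [E_y] are effects. Each [T_mu] permutes the generators of Omega_AB, hence dense
   coding is a special classical protocol on Omega_AB, and the noiseless channel on
   [2^N] symbols carries [N] bits. On a single hypersphere, averaging a state with its
   antipode gives [e . w <= 2 e_0] for every effect, so each row of a channel is
   dominated by twice the distribution [y |-> e_y(0)]; by Gibbs' inequality the
   information is then at most one bit, which a bit encoded along one axis attains. *)

Local Open Scope R_scope.

Section FiniteSums.
Context {T : finType}.

Lemma sumR_ext (f g : T -> R) : (forall i, f i = g i) -> sumR f = sumR g.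
Proof. by move=> fg; apply: eq_bigr => i _. Qed.

Lemma sumRD (f g : T -> R) : sumR (fun i => f i + g i) = sumR f + sumR g.
Proof. exact: big_split. Qed.

Lemma mulR_sumr (c : R) (f : T -> R) : c * sumR f = sumR (fun i => c * f i).
Proof.
rewrite /sumR; apply: (big_rec2 (fun a b => c * a = b)); first ring.
by move=> i a b _ <-; ring.
Qed.

Lemma mulR_suml (c : R) (f : T -> R) : sumR f * c = sumR (fun i => f i * c).
Proof. by rewrite Rmult_comm mulR_sumr; apply: sumR_ext => i; ring. Qed.

Lemma ler_sumR {f g : T -> R} : (forall i, f i <= g i) -> sumR f <= sumR g.
Proof.
move=> fg; rewrite /sumR; apply: (big_rec2 (fun a b => a <= b)); first lra.
by move=> i a b _; have := fg i; lra.
Qed.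

Lemma sumR_ge0 (f : T -> R) : (forall i, 0 <= f i) -> 0 <= sumR f.
Proof.
by move=> f0; apply: (big_rec (fun a => 0 <= a)) => [|i a _]; [lra | have := f0 i; lra].
Qed.

Lemma sumR_const (c : R) : sumR (fun _ : T => c) = INR #|T| * c.
Proof.
rewrite /sumR big_const cardE; elim: (size _) => [|n IHn]; first by rewrite /=; ring.
rewrite [iter _ _ _]/= IHn S_INR; ring.
Qed.

Lemma sumR_eq_single (i0 : T) (f : T -> R) :
  (forall i, i != i0 -> f i = 0) -> sumR f = f i0.
Proof. by move=> f0; rewrite /sumR (bigD1 i0) // big1 /=; [ring | move=> i /f0]. Qed.

Lemma sumR_eq_pair (i0 i1 : T) (f : T -> R) : i1 != i0 ->
  (forall i, i != i0 -> i != i1 -> f i = 0) -> sumR f = f i0 + f i1.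
Proof.
move=> i10 f0; rewrite /sumR (bigD1 i0) // (bigD1 i1) // big1 /=; first ring.
by move=> i /andP[]; apply: f0.
Qed.

Lemma sumR_ge_single (i0 : T) (f : T -> R) : (forall i, 0 <= f i) -> f i0 <= sumR f.
Proof.
move=> f0; rewrite /sumR (bigD1 i0) //=.
suff : 0 <= \big[Rplus/0]_(i | i != i0) f i by lra.
by apply: (big_rec (fun a => 0 <= a)) => [|i a _]; [lra | have := f0 i; lra].
Qed.

Lemma sumR_odd_involution (h : T -> T) (f : T -> R) :
  injective h -> (forall i, f (h i) = - f i) -> sumR f = 0.
Proof.
move=> h_inj fh; have : sumR f = - 1 * sumR f.
  by rewrite mulR_sumr /sumR (reindex_inj h_inj); apply: eq_bigr => i _; rewrite fh; ring.
lra.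
Qed.

End FiniteSums.

Lemma sumR_swap {I J : finType} (F : I -> J -> R) :
  sumR (fun i => sumR (F i)) = sumR (fun j => sumR (fun i => F i j)).
Proof. exact: exchange_big. Qed.

Lemma sumR_pair {I J : finType} (F : I * J -> R) :
  sumR F = sumR (fun i => sumR (fun j => F (i, j))).
Proof. by rewrite /sumR pair_bigA; apply: eq_bigr => -[]. Qed.

Lemma sumR_mul {I J : finType} (f : I -> R) (g : J -> R) :
  sumR f * sumR g = sumR (fun ij : I * J => f ij.1 * g ij.2).
Proof.
rewrite sumR_pair mulR_suml; apply: sumR_ext => i; exact: mulR_sumr.
Qed.

Lemma sumR_enum_val {T : finType} (F : T -> R) :
  sumR (fun i : 'I_#|T| => F (enum_val i)) = sumR F.
Proof. by rewrite /sumR (big_enum_val (A := T)). Qed.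

Lemma pow_m1_addn (a b : nat) : (-1) ^ (a + b)%N = (-1) ^ a * (-1) ^ b.
Proof. by rewrite -plusE pow_add. Qed.

Lemma pow_m1_double (d : nat) : (-1) ^ (d + d)%N = 1.
Proof. by rewrite pow_m1_addn -Rpow_mult_distr Rmult_opp_opp Rmult_1_l pow1. Qed.

Lemma card_idx (N : nat) : INR #|idx N| = 2 ^ N.
Proof.
rewrite card_ffun card_bool card_ord; elim: N => [//|N IHN].
by rewrite expnS -multE mult_INR IHN.
Qed.

Section WalshCharacters.
Context {N : nat}.

Definition toggle (k : 'I_N) (nu : idx N) : idx N :=
  [ffun i => if i == k then ~~ nu i else nu i].
Definition xorv (mu nu : idx N) : idx N := [ffun i => mu i != nu i].

Lemma toggle_inj (k : 'I_N) : injective (toggle k).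
Proof.
apply: (can_inj (g := toggle k)) => nu; apply/ffunP => i.
by rewrite !ffunE; case: eqP; rewrite ?negbK.
Qed.

Lemma xorvv (x : idx N) : xorv x x = zero_idx N.
Proof. by apply/ffunP => i; rewrite !ffunE eqxx. Qed.

Lemma xorv0 (x : idx N) : xorv x (zero_idx N) = x.
Proof. by apply/ffunP => i; rewrite !ffunE; case: (x i). Qed.

Lemma xorv_eq0 (x y : idx N) : (xorv x y == zero_idx N) = (x == y).
Proof.
apply/eqP/eqP => [xy0|->]; last exact: xorvv.
by apply/ffunP => i; move/ffunP/(_ i): xy0; rewrite !ffunE; case: (x i); case: (y i).
Qed.

Lemma dvec_sym (mu nu : idx N) : dvec mu nu = dvec nu mu.
Proof. by rewrite /dvec /bdot; congr (_ ^ _); apply: eq_card => i; rewrite !inE andbC. Qed.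

Lemma dvec0 (nu : idx N) : dvec (zero_idx N) nu = 1.
Proof.
rewrite /dvec /bdot (_ : [set i | _] = set0) ?cards0 //.
by apply/setP => i; rewrite !inE ffunE.
Qed.

Lemma dvec_toggle (k : 'I_N) (mu nu : idx N) : mu k ->
  dvec mu (toggle k nu) = - dvec mu nu.
Proof.
move=> muk; rewrite /dvec /bdot.
set A := [set i | mu i && nu i]; set A' := [set i | _].
have -> : #|A'| = ((k \in A') + #|A :\ k|)%N.
  rewrite (cardsD1 k A'); congr (_ + _)%N; apply: eq_card => i.
  by rewrite !inE /toggle ffunE; case: eqP.
rewrite (cardsD1 k A) !pow_m1_addn !inE /toggle ffunE eqxx muk.
by case: (nu k) => /=; ring.
Qed.

Lemma dvecM (x y v : idx N) : dvec x v * dvec y v = dvec (xorv x y) v.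
Proof.
rewrite /dvec /bdot -pow_m1_addn.
set A := [set i | x i && v i]; set B := [set i | y i && v i].
have -> : [set i | xorv x y i && v i] = (A :|: B) :\: (A :&: B).
  by apply/setP => i; rewrite !inE ffunE; case: (x i); case: (y i); case: (v i).
have AUB := cardsUI A B; have := cardsID (A :&: B) (A :|: B).
rewrite (setIidPr (subset_trans (subsetIl A B) (subsetUl A B))) => split_AUB.
rewrite -AUB -split_AUB addnAC !pow_m1_addn -(pow_m1_addn #|A :&: B|) pow_m1_double; ring.
Qed.

Lemma dvec_sqr (x v : idx N) : dvec x v * dvec x v = 1.
Proof. by rewrite dvecM xorvv dvec0. Qed.

Lemma sumR_dvec (mu : idx N) :
  sumR (dvec mu) = if mu == zero_idx N then 2 ^ N else 0.
Proof.
have [->|mu_neq0] := eqVneq mu (zero_idx N).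
  by rewrite (sumR_ext _ _ dvec0) sumR_const card_idx Rmult_1_r.
have [k muk] : exists k, mu k.
  apply/existsP; apply: contraNT mu_neq0; rewrite negb_exists => /forallP mu0.
  by apply/eqP/ffunP => i; rewrite ffunE; apply/negbTE.
apply: (@sumR_odd_involution _ (toggle k) (dvec mu) (toggle_inj k)) => nu.
exact: dvec_toggle.
Qed.

Lemma dvec_orthogonal (x y : idx N) :
  sumR (fun i => dvec x i * dvec y i) = if x == y then 2 ^ N else 0.
Proof. by rewrite (sumR_ext _ _ (dvecM x y)) sumR_dvec xorv_eq0. Qed.

End WalshCharacters.

Lemma pow2_ge2 {N : nat} : (0 < N)%nat -> 2 <= 2 ^ N.
Proof. by case: N => [//|N] _ /=; have := pow_R1_Rle 2 N; lra. Qed.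

Section DenseCodingProtocol.
Context {N : nat}.

Lemma sumR_diag (f : idx N -> R) (g : mat N) :
  sumR (fun ij : idx N * idx N => (if ij.1 == ij.2 then f ij.1 else 0) * g ij) =
  sumR (fun i => f i * g (i, i)).
Proof.
rewrite sumR_pair; apply: sumR_ext => i; rewrite (sumR_eq_single i) /= ?eqxx //.
by move=> j /negbTE; rewrite eq_sym => ->; ring.
Qed.

Lemma applyA_phi (mu : idx N) (Y : mat N) ij :
  applyA (phi mu) Y ij = dvec mu ij.1 * Y ij.
Proof.
case: ij => i j; rewrite /applyA (sumR_eq_single i) /phi /= ?eqxx //.
by move=> k /negbTE; rewrite eq_sym => ->; ring.
Qed.

Lemma applyA_phi_phi (mu nu : idx N) : applyA (phi mu) (phi nu) = phi (xorv mu nu).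
Proof.
apply: functional_extensionality => -[i j]; rewrite applyA_phi /phi /=.
by case: (i == j); rewrite ?dvecM //; ring.
Qed.

Lemma mdot_Emu (y : idx N) (X : mat N) :
  mdot (Emu y) X = / 2 ^ N * sumR (fun i => dvec y i * X (i, i)).
Proof.
rewrite mulR_sumr (sumR_ext _ (fun i => / 2 ^ N * dvec y i * X (i, i))); last first.
  by move=> i; rewrite Rmult_assoc.
rewrite -sumR_diag; apply: sumR_ext => ij; rewrite /Emu /phi.
by case: (ij.1 == ij.2); rewrite ?Rmult_0_r ?Rmult_0_l.
Qed.

Lemma mdot_Emu_phi (y x : idx N) : mdot (Emu y) (phi x) = if y == x then 1 else 0.
Proof.
rewrite mdot_Emu (sumR_ext _ (fun i => dvec y i * dvec x i)); last first.
  by move=> i; rewrite /phi /= eqxx.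
rewrite dvec_orthogonal; case: (y == x); last ring.
by apply: Rinv_l; apply: pow_nonzero; lra.
Qed.

Lemma mdot_Emu_Tmu_phi0 (x y : idx N) :
  mdot (Emu y) (applyA (Tmu x) (phi (zero_idx N))) = if x == y then 1 else 0.
Proof. by rewrite /Tmu applyA_phi_phi xorv0 mdot_Emu_phi eq_sym. Qed.

Lemma sumR_Emu (a : idx N * idx N) : sumR (fun y => Emu y a) = unitAB a.
Proof.
case: a => i j; rewrite /Emu /unitAB /tensor /unit_vec /phi /= -mulR_sumr.
have [<-|ij] := eqVneq i j; last first.
  rewrite sumR_const !Rmult_0_r.
  case: eqP => [ei|_]; case: eqP => [ej|_]; rewrite ?Rmult_0_l ?Rmult_0_r //.
  by case/eqP: ij; rewrite ei ej.
rewrite (sumR_ext _ (dvec i) (dvec_sym^~ i)) sumR_dvec; case: (i == _); last ring.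
by rewrite Rinv_l ?Rmult_1_l //; apply: pow_nonzero; lra.
Qed.

End DenseCodingProtocol.

Section ConvexHull.
Context {A : Type}.
Implicit Types (S : (A -> R) -> Prop) (X : A -> R).

Lemma conv_fin {I : finType} {S} (l : I -> R) (s : I -> A -> R) {X} :
  (forall i, 0 <= l i) -> sumR l = 1 -> (forall i, S (s i)) ->
  (forall a, X a = sumR (fun i => l i * s i a)) -> conv S X.
Proof.
move=> l_ge0 l_sum1 Ss X_comb.
exists #|I|, (l \o enum_val), (s \o enum_val); split; first by move=> i; apply: l_ge0.
split; first by rewrite (sumR_enum_val l).
split; first by move=> i; apply: Ss.
by move=> a; rewrite X_comb -(sumR_enum_val (fun i => l i * s i a)).
Qed.

Lemma conv_mem S X : S X -> conv S X.
Proof.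
move=> SX; apply: (conv_fin (I := unit) (fun=> 1) (fun=> X)) => //.
- by move=> _; lra.
- by rewrite sumR_const card_unit /=; ring.
- by move=> a; rewrite sumR_const card_unit /=; ring.
Qed.

Lemma conv_scale S S' (g : A -> R) X :
  (forall Y, S Y -> S' (fun a => g a * Y a)) -> conv S X -> conv S' (fun a => g a * X a).
Proof.
move=> SS' [k [l [s [l_ge0 [l_sum1 [Ss X_comb]]]]]].
exists k, l, (fun i a => g a * s i a); do 3!split=> //; first by move=> i; apply: SS'.
by move=> a; rewrite X_comb mulR_sumr; apply: sumR_ext => i; ring.
Qed.

End ConvexHull.

Lemma fdot_conv_comb {A : finType} (E : A -> R) {X : A -> R} {k} {l : 'I_k -> R}
    {s : 'I_k -> A -> R} :
  (forall a, X a = sumR (fun i => l i * s i a)) ->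
  fdot E X = sumR (fun i => l i * fdot E (s i)).
Proof.
move=> X_comb; rewrite /fdot (sumR_ext _ (fun a => sumR (fun i => l i * (E a * s i a)))).
  by rewrite sumR_swap; apply: sumR_ext => i; rewrite mulR_sumr.
by move=> a; rewrite X_comb mulR_sumr; apply: sumR_ext => i; ring.
Qed.

Lemma conv_fdot_bound {A : finType} {S : (A -> R) -> Prop} {E X : A -> R} {lo hi : R} :
  (forall Y, S Y -> lo <= fdot E Y <= hi) -> conv S X -> lo <= fdot E X <= hi.
Proof.
move=> S_bound [k [l [s [l_ge0 [l_sum1 [Ss X_comb]]]]]].
rewrite (fdot_conv_comb E X_comb).
have const_comb c : sumR (fun i => l i * c) = c by rewrite -mulR_suml l_sum1 Rmult_1_l.
rewrite -{1}(const_comb lo) -(const_comb hi).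
split; apply: ler_sumR => i; have := S_bound _ (Ss i); have := l_ge0 i; nra.
Qed.

Section JointStates.
Context {N : nat}.

Lemma Omega_dvec_product_bound (y : idx N) {v w : vec N} : Omega v -> Omega w ->
  0 <= sumR (fun i => dvec y i * (v i * w i)) <= 2.
Proof.
move=> [v0 v_norm] [w0 w_norm].
set V := fun i => if i == zero_idx N then 0 else v i ^ 2.
set W := fun i => if i == zero_idx N then 0 else w i ^ 2.
have V_ge0 : 0 <= sumR V by apply: sumR_ge0 => i; rewrite /V; case: eqP => _; nra.
have W_ge0 : 0 <= sumR W by apply: sumR_ge0 => i; rewrite /W; case: eqP => _; nra.
have term i : unit_vec i + - / 2 * (V i + W i) <= dvec y i * (v i * w i) <=
              unit_vec i + / 2 * (V i + W i).
  rewrite /unit_vec /V /W; case: eqP => [->|_]; first by rewrite v0 w0 dvec_sym dvec0; lra.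
  (* AM-GM: [|d v w| <= (v^2 + w^2) / 2] because [d^2 = 1] *)
  have d2 := dvec_sqr y i.
  have := Rle_0_sqr (v i - dvec y i * w i); have := Rle_0_sqr (v i + dvec y i * w i).
  rewrite /Rsqr; nra.
have comb c : sumR (fun i => unit_vec i + c * (V i + W i)) = 1 + c * (sumR V + sumR W).
  rewrite sumRD -mulR_sumr sumRD (sumR_eq_single (zero_idx N)) /unit_vec ?eqxx //.
  by move=> i /negbTE ->.
have := ler_sumR (fun i => proj1 (term i)); have := ler_sumR (fun i => proj2 (term i)).
rewrite !comb; have : sumR V <= 1 := v_norm; have : sumR W <= 1 := w_norm; lra.
Qed.

Lemma Emu_effect (y : idx N) : (0 < N)%nat -> EffectAB (Emu y).
Proof.
move=> N_gt0 X X_AB; apply: (conv_fdot_bound _ X_AB) => Y [Y_min|[mu ->]]; last first.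
  by rewrite -/(mdot _ _) mdot_Emu_phi; case: (y == mu); lra.
apply: (conv_fdot_bound _ Y_min) => Z [v [w [v_st [w_st ->]]]].
rewrite -/(mdot _ _) mdot_Emu.
have := Omega_dvec_product_bound y v_st w_st; rewrite /tensor /=.
have := pow2_ge2 N_gt0; have := Rinv_l (2 ^ N); have := Rinv_0_lt_compat (2 ^ N).
move: (sumR _) (/ 2 ^ N) => s inv; nra.
Qed.

Definition OmegaAB_gen (Y : mat N) : Prop := MinTensor Y \/ exists mu, Y = phi mu.

Lemma Omega_dvec_mul (mu : idx N) (v : vec N) :
  Omega v -> Omega (fun i => dvec mu i * v i).
Proof.
move=> [v0 v_norm]; split; first by rewrite v0 dvec_sym dvec0 Rmult_1_r.
rewrite (sumR_ext _ (fun i => if i == zero_idx N then 0 else v i ^ 2)) //.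
by move=> i; case: (_ == _) => //; rewrite Rpow_mult_distr /= Rmult_1_r dvec_sqr Rmult_1_l.
Qed.

Lemma MinTensor_applyA_phi (mu : idx N) (Y : mat N) :
  MinTensor Y -> MinTensor (applyA (phi mu) Y).
Proof.
rewrite (functional_extensionality _ _ (applyA_phi mu Y)).
apply: conv_scale => _ [v [w [v_st [w_st ->]]]].
exists (fun i => dvec mu i * v i), w; split; first exact: Omega_dvec_mul.
by split=> //; apply: functional_extensionality => ij; rewrite /tensor Rmult_assoc.
Qed.

Lemma OmegaAB_gen_applyA_phi (mu : idx N) (Y : mat N) :
  OmegaAB_gen Y -> OmegaAB_gen (applyA (phi mu) Y).
Proof.
case=> [Y_min|[nu ->]]; first by left; apply: MinTensor_applyA_phi.
by right; exists (xorv mu nu); rewrite applyA_phi_phi.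
Qed.

Lemma applyA_conv_comb {I J : finType} (l1 : I -> R) (t : I -> mat N)
    (l2 : J -> R) (s : J -> mat N) (ij : idx N * idx N) :
  applyA (fun a => sumR (fun i => l1 i * t i a)) (fun a => sumR (fun j => l2 j * s j a)) ij =
  sumR (fun p : I * J => l1 p.1 * l2 p.2 * applyA (t p.1) (s p.2) ij).
Proof.
rewrite /applyA sumR_pair (sumR_ext _ (fun c : idx N => sumR (fun i => sumR (fun j =>
  l1 i * l2 j * (t i (ij.1, c) * s j (c, ij.2)))))); last first.
  move=> c; rewrite sumR_mul sumR_pair.
  by apply: sumR_ext => i; apply: sumR_ext => j /=; ring.
rewrite [LHS]sumR_swap; apply: sumR_ext => i; rewrite [LHS]sumR_swap.
apply: sumR_ext => j /=.
by rewrite mulR_sumr.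
Qed.

Lemma OmegaAB_applyA (T X : mat N) : AllowedT T -> OmegaAB X -> OmegaAB (applyA T X).
Proof.
move=> [k1 [l1 [t [l1_ge0 [l1_sum1 [t_gen T_comb]]]]]].
move=> [k2 [l2 [s [l2_ge0 [l2_sum1 [s_gen X_comb]]]]]].
rewrite (functional_extensionality _ _ T_comb) (functional_extensionality _ _ X_comb).
apply: (conv_fin (fun p => l1 p.1 * l2 p.2) (fun p => applyA (t p.1) (s p.2))).
- by move=> p; apply: Rmult_le_pos.
- by rewrite -sumR_mul l1_sum1 l2_sum1 Rmult_1_l.
- by move=> p; have [mu ->] := t_gen p.1; apply: OmegaAB_gen_applyA_phi.
- exact: applyA_conv_comb.
Qed.

End JointStates.

Lemma achDC_achC_AB (N : nat) (c : R) : achDC N c -> achC_AB N c.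
Proof.
move=> [phi0 [phi0_AB [k [m [p [T [E [p_distr [T_allowed [E_eff [E_sum ->]]]]]]]]]]].
exists k, m, p, (fun x => applyA (T x) phi0), E.
by split=> //; split=> // x; apply: OmegaAB_applyA.
Qed.

Lemma ln2_gt0 : 0 < ln 2.
Proof. by have := ln_lt_2; lra. Qed.

Lemma log2_pow2 (n : nat) : log2 (2 ^ n) = INR n.
Proof. by rewrite /log2 ln_pow; [field; have := ln2_gt0; lra | lra]. Qed.

Lemma ln_le_sub1 (z : R) : 0 < z -> ln z <= z - 1.
Proof. by move=> z_gt0; have := exp_ineq1_le (ln z); rewrite exp_ln //; lra. Qed.

Lemma MI_noiseless (k : nat) (p : 'I_k -> R) (q : 'I_k -> 'I_k -> R) :
  (0 < k)%nat -> (forall x, p x = / INR k) ->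
  (forall x y, q x y = if x == y then 1 else 0) -> MI p q = log2 (INR k).
Proof.
move=> k_gt0 p_unif q_id.
have k_pos : 0 < INR k by apply: lt_0_INR; apply/ltP.
have out_unif y : sumR (fun x => p x * q x y) = / INR k.
  rewrite (sumR_eq_single y) ?p_unif ?q_id ?eqxx ?Rmult_1_r // => x.
  by rewrite q_id => /negbTE ->; rewrite Rmult_0_r.
rewrite /MI (sumR_ext _ (fun _ => / INR k * log2 (INR k))).
  by rewrite sumR_const card_ord; field; lra.
move=> x; rewrite (sumR_eq_single x); last first.
  move=> y; rewrite q_id eq_sym => /negbTE ->; rewrite Rmult_0_r.
  by case: Rlt_dec => // zero_lt0; case: (Rlt_irrefl _ zero_lt0).
rewrite out_unif p_unif q_id eqxx Rmult_1_r /Rdiv Rmult_1_l Rinv_inv.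
by case: Rlt_dec => // - []; apply: Rinv_0_lt_compat.
Qed.

Lemma log2_ratio_le {q P a c : R} : 0 < q -> 0 < P -> 0 <= a -> q <= c * a ->
  log2 (q / P) <= log2 c + (a / P - 1) / ln 2.
Proof.
move=> q_gt0 P_gt0 a_ge0 q_le_ca.
have a_gt0 : 0 < a.
  have [|a0] := Rle_lt_or_eq_dec _ _ a_ge0 => //.
  by move: q_le_ca; rewrite -a0 Rmult_0_r; lra.
have c_gt0 : 0 < c by nra.
have ca_gt0 : 0 < c * a by apply: Rmult_lt_0_compat.
have q_ca_gt0 : 0 < q / (c * a) by apply: Rdiv_lt_0_compat.
have a_P_gt0 : 0 < a / P by apply: Rdiv_lt_0_compat.
have q_ca_le1 : q / (c * a) <= 1.
  rewrite -(Rinv_r (c * a)); last lra.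
  by apply: Rmult_le_compat_r => //; left; apply: Rinv_0_lt_compat.
have ln_le : ln (q / P) <= ln c + (a / P - 1).
  have -> : q / P = q / (c * a) * (c * (a / P)) by field; lra.
  rewrite (ln_mult (q / (c * a))) ?(ln_mult c) //; last exact: Rmult_lt_0_compat.
  by have := ln_le_sub1 _ q_ca_gt0; have := ln_le_sub1 _ a_P_gt0; lra.
have inv_ln2_ge0 : 0 <= / ln 2 by left; apply: Rinv_0_lt_compat; apply: ln2_gt0.
apply: Rle_trans (Rmult_le_compat_r _ _ _ inv_ln2_ge0 ln_le) _.
by right; rewrite /log2 /Rdiv; ring.
Qed.

(* Gibbs' inequality: the true output distribution is compared with [a]. *)
Lemma MI_le_log2 {k m} {p : 'I_k -> R} {q : 'I_k -> 'I_m -> R} {a : 'I_m -> R} {c : R} :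
  is_distr p -> (forall x y, 0 <= q x y) -> (forall x, sumR (q x) = 1) ->
  is_distr a -> (forall x y, q x y <= c * a y) -> MI p q <= log2 c.
Proof.
move=> [p_ge0 p_sum1] q_ge0 q_sum1 [a_ge0 a_sum1] q_le.
set P := fun y => sumR (fun x => p x * q x y).
have pq_ge0 x y : 0 <= p x * q x y by apply: Rmult_le_pos.
set g := fun x y => log2 c * (p x * q x y) + / ln 2 * (p x * q x y * (a y / P y)) +
                    - / ln 2 * (p x * q x y).
have term x y : (let j := p x * q x y in
                 if Rlt_dec 0 j then j * log2 (q x y / P y) else 0) <= g x y.
  rewrite /g /=; case: Rlt_dec => [j_gt0|j_not_gt0] /=; last first.
    have -> : p x * q x y = 0 by have := pq_ge0 x y; lra.
    by rewrite !Rmult_0_r Rmult_0_l Rmult_0_r !Rplus_0_r; right.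
  have q_gt0 : 0 < q x y.
    have [|q0] := Rle_lt_or_eq_dec _ _ (q_ge0 x y) => //.
    by move: j_gt0; rewrite -q0 Rmult_0_r; lra.
  have P_gt0 : 0 < P y.
    apply: Rlt_le_trans j_gt0 _.
    by apply: (sumR_ge_single x (fun x => p x * q x y)) => x'; apply: pq_ge0.
  apply: Rle_trans (Rmult_le_compat_l _ _ _ (pq_ge0 x y)
                      (log2_ratio_le q_gt0 P_gt0 (a_ge0 y) (q_le x y))) _.
  by right; rewrite /Rdiv; ring.
have dsum_lin (f1 f2 f3 : 'I_k -> 'I_m -> R) (c1 c2 c3 : R) :
    sumR (fun x => sumR (fun y => c1 * f1 x y + c2 * f2 x y + c3 * f3 x y)) =
    c1 * sumR (fun x => sumR (f1 x)) + c2 * sumR (fun x => sumR (f2 x)) +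
    c3 * sumR (fun x => sumR (f3 x)).
  rewrite !mulR_sumr -!sumRD; apply: sumR_ext => x; rewrite !mulR_sumr -!sumRD //.
have pq_sum1 : sumR (fun x => sumR (fun y => p x * q x y)) = 1.
  by rewrite -p_sum1; apply: sumR_ext => x; rewrite -mulR_sumr q_sum1 Rmult_1_r.
have weighted_le1 : sumR (fun x => sumR (fun y => p x * q x y * (a y / P y))) <= 1.
  rewrite sumR_swap -a_sum1; apply: ler_sumR => y; rewrite -mulR_suml -/(P y).
  have [->|P_neq0] := Req_dec (P y) 0; first by rewrite Rmult_0_l.
  by right; field.
apply: (Rle_trans _ _ _ (ler_sumR (fun x => ler_sumR (term x)))).
rewrite dsum_lin pq_sum1; have := Rinv_0_lt_compat _ ln2_gt0; nra.
Qed.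

Section SingleSystemCapacity.
Context {N : nat}.

Lemma Omega_unit_vec : Omega (@unit_vec N).
Proof.
split; first by rewrite /unit_vec eqxx.
rewrite (sumR_ext _ (fun _ => 0)); first by rewrite sumR_const Rmult_0_r; lra.
by move=> i; rewrite /unit_vec; case: eqP => //= _; ring.
Qed.

Lemma fdot_unit_vec (e : vec N) : fdot e (@unit_vec N) = e (zero_idx N).
Proof.
rewrite /fdot (sumR_eq_single (zero_idx N)) /unit_vec ?eqxx ?Rmult_1_r //.
by move=> i /negbTE ->; rewrite Rmult_0_r.
Qed.

Lemma fdot_Effect_le2 (e w : vec N) : Effect e -> Omega w -> fdot e w <= 2 * e (zero_idx N).
Proof.
move=> e_eff [w0 w_norm].
set w' := fun i => if i == zero_idx N then 1 else - w i.
have w'_st : Omega w'.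
  split; first by rewrite /w' eqxx.
  rewrite (sumR_ext _ (fun i => if i == zero_idx N then 0 else w i ^ 2)) //.
  by move=> i; rewrite /w'; case: (_ == _) => //; rewrite -Rsqr_pow2 -Rsqr_neg Rsqr_pow2.
have sum_w_w' : fdot e w + fdot e w' = 2 * e (zero_idx N).
  rewrite /fdot -sumRD (sumR_eq_single (zero_idx N)) /w' ?eqxx ?w0; first ring.
  by move=> i /negbTE ->; ring.
by have := e_eff _ w'_st; lra.
Qed.

Lemma achC_A_le1 (c : R) : achC_A N c -> c <= 1.
Proof.
move=> [k [m [p [w [e [p_distr [w_st [e_eff [e_sum ->]]]]]]]]].
have unit_coord_distr : is_distr (fun y => e y (zero_idx N)).
  split; first by move=> y; rewrite -fdot_unit_vec; case: (e_eff y _ Omega_unit_vec).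
  by rewrite e_sum /unit_vec eqxx.
have -> : 1 = log2 2 by rewrite -[2]pow_1 log2_pow2.
apply: (MI_le_log2 p_distr _ _ unit_coord_distr) => [x y|x|x y].
- by case: (e_eff y _ (w_st x)).
- rewrite /fdot sumR_swap -(w_st x).1 -(fdot_unit_vec (w x)) /fdot.
  by apply: sumR_ext => i; rewrite -mulR_suml e_sum Rmult_comm.
- exact: fdot_Effect_le2.
Qed.

Lemma sign_mul (x y : 'I_2) : (-1) ^ x * (-1) ^ y = if x == y then 1 else -1.
Proof. by case: x => [[|[|?]] ?] //; case: y => [[|[|?]] ?] //=; ring. Qed.

(* A bit is sent along one Bloch axis [nu]: states [(1, +-e_nu)], effects [(1, +-e_nu) / 2]. *)
Lemma achC_A_one (nu : idx N) : nu != zero_idx N -> achC_A N 1.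
Proof.
move=> nu_neq0.
set w := fun (x : 'I_2) i => if i == zero_idx N then 1 else if i == nu then (-1) ^ x else 0.
have fdot_w (y : 'I_2) (v : vec N) :
    fdot (fun i => / 2 * w y i) v = / 2 * v (zero_idx N) + / 2 * (-1) ^ y * v nu.
  rewrite /fdot (sumR_eq_pair (zero_idx N) nu) // /w ?eqxx ?(negbTE nu_neq0); first ring.
  by move=> i /negbTE -> /negbTE ->; ring.
exists 2%N, 2%N, (fun _ => / 2), w, (fun y i => / 2 * w y i); split.
  by split=> [_|]; [lra | rewrite sumR_const card_ord /=; field].
split.
  move=> x; split; first by rewrite /w eqxx.
  rewrite (sumR_eq_single nu) /w ?(negbTE nu_neq0) ?eqxx.
    by rewrite /= Rmult_1_r sign_mul eqxx; lra.
  by move=> i /negbTE ->; case: (_ == _) => /=; ring.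
split.
  move=> y v [v0 v_norm]; rewrite fdot_w v0.
  have vnu_sq : v nu ^ 2 <= 1.
    apply: Rle_trans v_norm.
    have := sumR_ge_single nu (fun i => if i == zero_idx N then 0 else v i ^ 2).
    by rewrite (negbTE nu_neq0); apply=> i; case: (_ == _); [lra | apply: pow2_ge_0].
  by have := sign_mul y y; rewrite eqxx; nra.
split.
  move=> a; rewrite /sumR big_ord_recl big_ord_recl big_ord0 /w /unit_vec.
  by case: (a == _); case: (a == nu) => /=; field.
rewrite (MI_noiseless 2) => [|//|//|x y].
  by rewrite (_ : INR 2 = 2 ^ 1) ?log2_pow2 //= Rmult_1_r.
rewrite fdot_w /w eqxx (negbTE nu_neq0) eqxx Rmult_assoc sign_mul eq_sym.
by case: (x == y); field.
Qed.

Lemma is_lub_achC_A : (0 < N)%nat -> is_lub (achC_A N) 1.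
Proof.
move=> N_gt0; split=> [c|b b_ub]; first exact: achC_A_le1.
apply: b_ub; apply: (achC_A_one ([ffun=> true] : idx N)).
by apply/eqP => /ffunP/(_ (Ordinal N_gt0)); rewrite !ffunE.
Qed.

End SingleSystemCapacity.

Lemma OmegaAB_phi {N : nat} (mu : idx N) : OmegaAB (phi mu).
Proof. by apply: conv_mem; right; exists mu. Qed.

Lemma AllowedT_Tmu {N : nat} (mu : idx N) : AllowedT (Tmu mu).
Proof. by apply: conv_mem; exists mu. Qed.

Lemma achDC_dense_coding {N : nat} : (0 < N)%nat -> achDC N (INR N).
Proof.
move=> N_gt0; exists (phi (zero_idx N)); split; first exact: OmegaAB_phi.
have card_pos : 0 < INR #|idx N| by rewrite card_idx; have := pow2_ge2 N_gt0; lra.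
exists #|idx N|, #|idx N|, (fun _ => / INR #|idx N|),
  (fun x => Tmu (enum_val x)), (fun y => Emu (enum_val y)).
split; first split.
- by move=> _; left; apply: Rinv_0_lt_compat.
- by rewrite sumR_const card_ord Rinv_r //; lra.
split; first by move=> x; apply: AllowedT_Tmu.
split; first by move=> y; apply: Emu_effect.
split; first by move=> a; rewrite (sumR_enum_val (fun y => Emu y a)) sumR_Emu.
rewrite (MI_noiseless #|idx N|) => [|||x y] //.
- by rewrite card_idx log2_pow2.
- by rewrite card_ffun card_bool expn_gt0.
- by rewrite mdot_Emu_Tmu_phi0 (inj_eq enum_val_inj).
Qed.

Theorem mainTheorem11 (N : nat) (hN : (0 < N)%nat) :
  (OmegaAB (phi (zero_idx N)) /\ (forall x : idx N, AllowedT (Tmu x)) /\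
   (forall y : idx N, EffectAB (Emu y)) /\
   (forall a, sumR (fun y : idx N => Emu y a) = @unitAB N a)) /\
  (forall x y : idx N,
     mdot (Emu y) (applyA (Tmu x) (phi (zero_idx N))) = if x == y then 1 else 0) /\
  (forall b, is_upper_bound (achC_AB N) b -> forall c, achDC N c -> c <= b) /\
  (forall b, is_upper_bound (achDC N) b -> INR N <= b) /\
  is_lub (achC_A N) 1 /\
  ((3 <= N)%nat ->
    (forall a, is_lub (achC_A N) a -> exists c, achDC N c /\ 2 * a < c) /\
    (forall a b, is_lub (achC_A N) a -> is_lub (achC_A N) b ->
       exists c, achC_AB N c /\ a + b < c)).
Proof.
have lub1 := is_lub_achC_A hN.
have lub_eq1 a : is_lub (achC_A N) a -> a = 1 by move/is_lub_u; apply.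
have dense := achDC_dense_coding hN.
split.
  split; first exact: OmegaAB_phi.
  split; first exact: AllowedT_Tmu.
  by split=> [y|]; [exact: Emu_effect | exact: sumR_Emu].
split; first exact: mdot_Emu_Tmu_phi0.
split; first by move=> b b_ub c /achDC_achC_AB /b_ub.
split; first by move=> b; apply.
split=> // /leP /le_INR; rewrite [INR 3]/= => N_ge3; split.
- by move=> a /lub_eq1 ->; exists (INR N); split=> //; lra.
- by move=> a b /lub_eq1 -> /lub_eq1 ->; exists (INR N); split; [exact: achDC_achC_AB | lra].
Qed.
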